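(* If $G$ is a graph on $n$ vertices with vertex connectivity $\kappa$, then $\operatorname{th}_{\operatorname{H}}(G)\geq \lceil 2\sqrt{n-\kappa}+\kappa-1\rceil$.
   Context: All graphs are finite, simple and undirected; vertex connectivity follows the usual convention ($\kappa(K_n)=n-1$, and $\kappa=0$ for disconnected graphs). Hopping color change rule: a blue vertex $v$ may force a white vertex $w$ to become blue if $v$ has not previously performed a force and every neighbor of $v$ is blue. For an initial blue set $B$, a chronological list of forces of $B$ is a sequence of such forces applied one at a time until no further force is possible; its underlying unordered set is a set of forces of $B$. $B$ is a hopping forcing set if some chronological list of forces of $B$ turns all vertices blue. For a set of forces $\mathcal F$ of $B$, let $\mathcal F^{(0)}=B$ and for $t\geq1$ let $\mathcal F^{(t)}$ be the set of vertices $w\notin U_{t-1}:=\bigcup_{i=0}^{t-1}\mathcal F^{(i)}$ for which there is $(v\to w)\in\mathcal F$ with $v\in U_{t-1}$ and all neighbors of $v$ in $U_{t-1}$. $\operatorname{pt}_{\operatorname{H}}(G;\mathcal F)$ is the least $t$ with $\bigcup_{i=0}^t\mathcal F^{(i)}=V(G)$ ($\infty$ if none); $\operatorname{pt}_{\operatorname{H}}(G;B)$ is the minimum of $\operatorname{pt}_{\operatorname{H}}(G;\mathcal F)$ over sets of forces $\mathcal F$ of $B$ ($\infty$ if $B$ is not a hopping forcing set). The hopping throttling number is $\operatorname{th}_{\operatorname{H}}(G)=\min_{B\subseteq V(G)}\big(|B|+\operatorname{pt}_{\operatorname{H}}(G;B)\big)$. *)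

From Stdlib Require Import ClassicalEpsilon.
From HB Require Import structures.
From mathcomp Require Import all_boot all_order all_algebra.
From mathcomp Require Import reals.
Set Implicit Arguments. Unset Strict Implicit. Unset Printing Implicit Defensive.

(* A simple graph is a symmetric irreflexive relation [e] on a finType [T]. *)

Definition pb (P : nat -> Prop) : pred nat :=
  fun n => if excluded_middle_informative (P n) then true else false.

Definition nat_inf (P : nat -> Prop) : option nat :=
  match excluded_middle_informative (exists n, pb P n) with
  | left h => Some (ex_minn h)
  | right _ => None
  end.

Section Hopping.
Variables (T : finType) (e : rel T).

Definition induced_rel (X : {set T}) : rel T :=
  [rel x y | [&& x \in X, y \in X & e x y]].

Definition connectedb (X : {set T}) : bool :=
  [forall x in X, forall y in X, connect (induced_rel X) x y].

(* kappa = least |S| such that G - S is disconnected or has at most one vertex;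
   the set S = V always qualifies, so #|T| is a harmless default. *)
Definition kappa : nat :=
  \big[minn/#|T|]_(S : {set T} | (#|~: S| <= 1) || ~~ connectedb (~: S)) #|S|.

Definition nbrs_in (v : T) (X : {set T}) : bool := [forall u, e v u ==> (u \in X)].

(* v may force w, given the current blue set and the set of vertices that
   have already performed a force *)
Definition valid_force (blue forced : {set T}) (v w : T) : bool :=
  [&& v \in blue, v \notin forced, w \notin blue & nbrs_in v blue].

(* s is a chronological list of forces starting from state (blue, forced),
   applied one at a time until no further force is possible *)
Fixpoint chrono (blue forced : {set T}) (s : seq (T * T)) : bool :=
  match s with
  | [::] => [forall v, forall w, ~~ valid_force blue forced v w]
  | (v, w) :: s' => valid_force blue forced v w && chrono (w |: blue) (v |: forced) s'
  end.

Definition is_force_set (B : {set T}) (F : {set T * T}) : Prop :=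
  exists s : seq (T * T), chrono B set0 s /\ F = [set x | x \in s].

(* one time step: U_{t-1} |-> U_{t-1} \cup F^{(t)} *)
Definition hstep (F : {set T * T}) (U : {set T}) : {set T} :=
  U :|: [set w | (w \notin U) &&
          [exists v, [&& (v, w) \in F, v \in U & nbrs_in v U]]].

Definition layers (F : {set T * T}) (B : {set T}) (t : nat) : {set T} :=
  iter t (hstep F) B.

Definition ptF (B : {set T}) (F : {set T * T}) : option nat :=
  nat_inf (fun t => layers F B t = [set: T]).

Definition ptB (B : {set T}) : option nat :=
  nat_inf (fun t => exists F, is_force_set B F /\ ptF B F = Some t).

Definition thH : option nat :=
  nat_inf (fun k => exists B t, ptB B = Some t /\ k = #|B| + t).

End Hopping.

(* If B hops to all of G in t rounds, let U be the blue set before a round that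
   still adds a vertex.  Only blue vertices with all neighbours blue (the interior
   of U) can force, and the rest of U separates the interior from the white
   vertices, so it has at least kappa vertices.  Since every vertex forces at most
   once, a round adds at most |B| - kappa vertices, whence
   n <= |B| + t (|B| - kappa).  By AM-GM,
   |B| + t = (|B| - kappa) + (t + 1) + kappa - 1
           >= 2 sqrt((|B| - kappa)(t + 1)) + kappa - 1 >= 2 sqrt(n - kappa) + kappa - 1. *)
From Stdlib Require Import ClassicalEpsilon.
From HB Require Import structures.
From mathcomp Require Import all_boot all_order all_algebra.
From mathcomp Require Import reals.
From mathcomp Require Import zify lra.
Import Order.TTheory GRing.Theory Num.Theory.

Set Implicit Arguments.
Unset Strict Implicit.
Unset Printing Implicit Defensive.

Lemma pbP (P : nat -> Prop) n : pb P n <-> P n.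
Proof. by rewrite /pb; case: excluded_middle_informative. Qed.

Lemma nat_inf_of (P : nat -> Prop) n : P n -> exists k, nat_inf P = Some k.
Proof.
move=> Pn; rewrite /nat_inf; case: excluded_middle_informative => [h|[]].
  by exists (ex_minn h).
by exists n; apply/pbP.
Qed.

Lemma nat_inf_some (P : nat -> Prop) k : nat_inf P = Some k -> P k.
Proof.
rewrite /nat_inf; case: excluded_middle_informative => // h [<-].
by case: ex_minnP => m /pbP.
Qed.

Definition functional (T : finType) (F : {set T * T}) : Prop :=
  forall v w w', (v, w) \in F -> (v, w') \in F -> w = w'.

Lemma card_le_sources (T : finType) (F : {set T * T}) (A I : {set T}) :
  functional F -> {in A, forall w, exists2 v, v \in I & (v, w) \in F} ->
  #|A| <= #|I|.
Proof.
move=> Ffun src; pose f v := odflt v [pick w | (v, w) \in F].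
apply: leq_trans (leq_imset_card f I); apply: subset_leq_card.
apply/subsetP=> w /src [v vI Fvw]; apply/imsetP; exists v => //.
by rewrite /f; case: pickP => [w' /(Ffun _ _ _ Fvw) | /(_ w)] /=; [|rewrite Fvw].
Qed.

Section HoppingBound.
Variables (T : finType) (e : rel T).
Hypothesis e_sym : symmetric e.

Definition interior (U : {set T}) : {set T} := [set x in U | nbrs_in e x U].

Lemma nbrs_in_subset v (X Y : {set T}) :
  X \subset Y -> nbrs_in e v X -> nbrs_in e v Y.
Proof.
move=> /subsetP sXY /forallP nbX; apply/forallP=> u.
by apply/implyP=> evu; apply/sXY/(implyP (nbX u)).
Qed.

Lemma interiorS (U V : {set T}) : U \subset V -> interior U \subset interior V.
Proof.
move=> sUV; apply/subsetP=> x; rewrite !inE => /andP[xU nbx].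
by rewrite (subsetP sUV _ xU) (nbrs_in_subset sUV nbx).
Qed.

Lemma kappa_min (S : {set T}) :
  (#|~: S| <= 1) || ~~ connectedb e (~: S) -> kappa e <= #|S|.
Proof.
move=> cutS; rewrite /kappa.
have : S \in index_enum {set T} by rewrite mem_index_enum.
elim: (index_enum _) => [|S' l IH] //; rewrite inE big_cons.
case/orP=> [/eqP<-|Sl]; first by rewrite cutS geq_minl.
by case: ifP => _; [apply: leq_trans (geq_minr _ _) (IH Sl) | apply: IH].
Qed.

Lemma kappa_le_card : kappa e <= #|T|.
Proof. by rewrite -cardsT kappa_min // setCT cards0. Qed.

(* Removing the non-interior part of U leaves no edge between U and its
   complement, so an interior vertex and a vertex outside U are disconnected. *)
Lemma card_interior_add_kappa (U : {set T}) v w :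
  v \in interior U -> w \notin U -> #|interior U| + kappa e <= #|U|.
Proof.
move=> vI wU; set S := U :\: interior U.
have sIU : interior U \subset U by apply/subsetP=> x; rewrite inE => /andP[].
suff : kappa e <= #|S|.
  by have := subset_leq_card sIU; rewrite /S cardsD (setIidPr sIU); lia.
apply/kappa_min/orP; right; apply/negP=> /forallP/(_ v)/implyP.
have notS x : x \in ~: S = (x \in interior U) || (x \notin U).
  by rewrite !inE; case: (x \in U); case: (nbrs_in e x U).
rewrite notS vI => /(_ isT)/forallP/(_ w)/implyP; rewrite notS wU orbT.
move=> /(_ isT) conn.
have Uclosed : closed (induced_rel e (~: S)) (mem U).
  have out x y : x \in ~: S -> e x y -> x \in U -> y \in U.
    rewrite notS => /orP[|/negP//]; rewrite inE => /andP[_ /forallP/(_ y)].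
    by move=> /implyP nb exy _; apply: nb.
  move=> x y /and3P[xS yS exy]; apply/idP/idP; first exact: out xS exy.
  by apply: out yS _; rewrite e_sym.
move: vI; rewrite inE => /andP[vU _].
by move: (closed_connect Uclosed conn) vU wU; rewrite -!topredE /= => -> ->.
Qed.

Definition spanned (F : {set T * T}) (B U : {set T}) : Prop :=
  B \subset U /\
  {in U :\: B, forall w, exists2 v, v \in interior U & (v, w) \in F}.

Lemma hstep_sources (F : {set T * T}) (B U : {set T}) :
  spanned F B U ->
  {in hstep e F U :\: B, forall w, exists2 v, v \in interior U & (v, w) \in F}.
Proof.
move=> [_ srcU] w /setDP[]; rewrite /hstep in_setU inE.
case: (boolP (w \in U)) => [wU _ wB | _ /= /existsP[v /and3P[Fvw vU nbv]] _].
  by apply: srcU; rewrite inE wB.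
by exists v; rewrite // inE vU.
Qed.

Lemma spanned_layers (F : {set T * T}) (B : {set T}) t :
  spanned F B (layers e F B t).
Proof.
elim: t => [|t IH] /=; first by split=> // w; rewrite setDv inE.
have sUV : layers e F B t \subset hstep e F (layers e F B t) by apply: subsetUl.
split; first exact: subset_trans IH.1 sUV.
move=> w /(hstep_sources IH) [v vI Fvw].
by exists v; first exact: subsetP (interiorS sUV) v vI.
Qed.

Lemma card_hstep (F : {set T * T}) (B U : {set T}) :
  functional F -> spanned F B U -> #|hstep e F U| <= #|U| + (#|B| - kappa e).
Proof.
move=> Ffun spU; set V := hstep e F U.
have sUV : U \subset V by apply: subsetUl.
have [sVU | /subsetPn [w wV wU]] := boolP (V \subset U).
  by rewrite (eqP (_ : V == U)) ?eqEsubset ?sVU ?sUV ?leq_addr.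
have src := hstep_sources spU.
have [v vI _] : exists2 v, v \in interior U & (v, w) \in F.
  by apply: src; rewrite inE wV (contraNN (subsetP spU.1 w)).
have cardI := card_interior_add_kappa vI wU.
have cardVB : #|V :\: B| <= #|interior U| := card_le_sources Ffun src.
have sBV : B \subset V := subset_trans spU.1 sUV.
have := cardsID B V; rewrite (setIidPr sBV); lia.
Qed.

Lemma card_layers (F : {set T * T}) (B : {set T}) t :
  functional F -> #|layers e F B t| <= #|B| + t * (#|B| - kappa e).
Proof.
move=> Ffun; elim: t => [|t IH] /=; first by rewrite addn0.
have := card_hstep Ffun (spanned_layers F B t); rewrite mulSn; lia.
Qed.

Lemma chrono_unforced (blue forced : {set T}) s :
  chrono e blue forced s -> {in s, forall x, x.1 \notin forced}.
Proof.
elim: s blue forced => [|[v w] s IH] blue forced //= /andP[vw_ok hs] x.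
rewrite inE => /orP[/eqP-> | xs]; first by case/and4P: vw_ok.
by have := IH _ _ hs x xs; rewrite in_setU1 negb_or => /andP[].
Qed.

Lemma chrono_functional (blue forced : {set T}) s :
  chrono e blue forced s -> functional [set x | x \in s].
Proof.
elim: s blue forced => [|[v0 w0] s IH] blue forced /=.
  by move=> _ v w w'; rewrite inE.
move=> /andP[_ hs] v w w'.
have unforced := chrono_unforced hs.
have v0_forces_once x : x \in s -> x.1 = v0 -> False.
  by move=> xs x1; have := unforced x xs; rewrite x1 setU11.
rewrite !inE => /orP[/eqP[-> ->]|h1] /orP[/eqP|h2].
- by case.
- by case: (v0_forces_once _ h2 erefl).
- by case=> v0E _; case: (v0_forces_once _ h1 v0E).
- by apply: (IH _ _ hs v); rewrite inE.
Qed.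

Lemma force_set_functional (B : {set T}) (F : {set T * T}) :
  is_force_set e B F -> functional F.
Proof. by move=> [s [hs ->]]; apply: chrono_functional hs. Qed.

Lemma ptB_setT : exists t, ptB e [set: T] = Some t.
Proof.
have [t ptF0] : exists t, ptF e [set: T] set0 = Some t by apply: (@nat_inf_of _ 0).
apply: (@nat_inf_of _ t); exists set0; split => //; exists [::]; split.
  by apply/forallP=> v; apply/forallP=> w; rewrite /valid_force !in_setT andbF.
by apply/setP=> x; rewrite !inE.
Qed.

End HoppingBound.

Lemma sqrt_bound_of_growth (R : rcfType) (n k b t : nat) :
  k <= n -> n <= b + t * (b - k) ->
  (2 * Num.sqrt ((n - k)%:R : R) + k%:R - 1 <= (b + t)%:R)%R.
Proof.
move=> kn growth.
have sq_ge0 := sqrtr_ge0 ((n - k)%:R : R).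
have := sqr_sqrtr (ler0n R (n - k)); set sq := Num.sqrt _.
rewrite natrB // expr2 natrD => sq2.
have t_ge0 : (0 <= t%:R :> R)%R := ler0n R t.
have [bk | kb] := leqP b k.
  have nk : n = k by move: growth; rewrite (_ : b - k = 0) ?muln0; lia.
  have sq0 : sq = 0%R by rewrite /sq nk subnn sqrtr0.
  have kb : (k%:R <= b%:R :> R)%R by rewrite ler_nat; lia.
  by rewrite sq0; lra.
have growthR : (n%:R <= b%:R + t%:R * (b%:R - k%:R) :> R)%R.
  by rewrite -natrB ?(ltnW kb) // -natrM -natrD ler_nat.
have kbR : (k%:R < b%:R :> R)%R by rewrite ltr_nat.
have amgm : (0 <= (b%:R - k%:R - sq) ^+ 2 :> R)%R := sqr_ge0 _.
rewrite expr2 in amgm; nra.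
Qed.

Theorem theorem3p1 (R : realType) (T : finType) (e : rel T)
    (e_sym : symmetric e) (e_irr : irreflexive e) :
  exists k : nat, thH e = Some k /\
    (Num.ceil (2 * Num.sqrt ((#|T| - kappa e)%:R : R) + (kappa e)%:R - 1)
       <= k%:Z)%R.
Proof.
have [t0 pt0] := ptB_setT e.
have [k thk] : exists k, thH e = Some k.
  by apply: nat_inf_of (#|[set: T]| + t0) _; exists [set: T], t0.
exists k; split => //.
have [B [t [ptBt ->]]] := nat_inf_some thk.
have [F [forces ptFt]] := nat_inf_some ptBt.
have := card_layers e_sym B t (force_set_functional forces).
rewrite (nat_inf_some ptFt) cardsT => growth.
rewrite ceil_le_int.
exact: sqrt_bound_of_growth (kappa_le_card e) growth.
Qed.
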